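(* For a second-countable well-filtered space $X$ the following are equivalent: (1) $X$ is locally compact. (2) $\mathsf{K}(X)$ is a continuous semilattice, and $\xi_X^\sigma:X\to\Sigma\,\mathsf{K}(X)$, $x\mapsto\uparrow x$, is continuous. (3) $\mathsf{K}(X)$ is a continuous semilattice, and $X$ has property Q. (4) $\mathsf{K}(X)$ is a continuous semilattice. (5) $X$ is core compact.
   Context: Spaces are $T_0$; specialization order $x\le y$ iff $x\in\overline{\{y\}}$; saturated = upper set. $\mathsf{K}(X)$ = nonempty compact saturated subsets ordered by reverse inclusion (suprema, when they exist, are intersections). Scott topology on a poset: upper sets $U$ such that every directed $D$ with existing supremum in $U$ meets $U$; $\Sigma Q$ is $Q$ with it. $a\ll b$ means for every directed $D$ with existing $\bigvee D\ge b$ some $d\in D$ has $d\ge a$; $\mathsf{K}(X)$ is a continuous semilattice if it is directed complete and each $K$ is the directed supremum of $\{L:L\ll K\}$. Well-filtered: for open $U$ and $\mathcal K\subseteq\mathsf{K}(X)$ filtered under inclusion, $\bigcap\mathcal K\subseteq U$ implies some $K\in\mathcal K$ lies in $U$. Property Q: $K_1\ll K_2$ iff $K_2\subseteq\operatorname{int}K_1$. Locally compact: neighborhood bases of compact sets. Core compact: open-set lattice is continuous. *)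

From Stdlib Require Import List.

Set Implicit Arguments.

Definition subset {X : Type} (A B : X -> Prop) : Prop := forall x, A x -> B x.

Record topology (X : Type) := Topology {
  is_open : (X -> Prop) -> Prop;
  open_full : is_open (fun _ => True);
  open_inter : forall U V, is_open U -> is_open V -> is_open (fun x => U x /\ V x);
  open_union : forall F : (X -> Prop) -> Prop,
      (forall U, F U -> is_open U) -> is_open (fun x => exists U, F U /\ U x)
}.

Arguments is_open {X} t U.

Section Topo.
Context {X : Type} (T : topology X).

Definition T0 : Prop :=
  forall x y, (forall U, is_open T U -> (U x <-> U y)) -> x = y.

Definition second_countable : Prop :=
  exists B : nat -> (X -> Prop),
    (forall n, is_open T (B n)) /\
    (forall U, is_open T U -> forall x, U x ->
        exists n, B n x /\ subset (B n) U).

(* specialization order: x <= y iff x in closure {y} iff every open nbhd of x contains y *)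
Definition spec_le (x y : X) : Prop := forall U, is_open T U -> U x -> U y.

Definition upset (x : X) : X -> Prop := fun y => spec_le x y.

Definition saturated (A : X -> Prop) : Prop := forall x y, A x -> spec_le x y -> A y.

Definition compact (K : X -> Prop) : Prop :=
  forall C : (X -> Prop) -> Prop,
    (forall U, C U -> is_open T U) ->
    subset K (fun x => exists U, C U /\ U x) ->
    exists l : list (X -> Prop),
      (forall U, In U l -> C U) /\ subset K (fun x => exists U, In U l /\ U x).

Definition interior (A : X -> Prop) : X -> Prop :=
  fun x => exists U, is_open T U /\ U x /\ subset U A.

Definition KX (K : X -> Prop) : Prop :=
  (exists x, K x) /\ compact K /\ saturated K.

Definition Kle (K1 K2 : X -> Prop) : Prop := subset K2 K1.

(* directed subset of K(X) (w.r.t. reverse inclusion) = filtered under inclusion *)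
Definition Kdirected (D : (X -> Prop) -> Prop) : Prop :=
  (forall K, D K -> KX K) /\ (exists K, D K) /\
  (forall K1 K2, D K1 -> D K2 -> exists K3, D K3 /\ Kle K1 K3 /\ Kle K2 K3).

Definition Ksup (D : (X -> Prop) -> Prop) (S : X -> Prop) : Prop :=
  KX S /\ (forall K, D K -> Kle K S) /\
  (forall L, KX L -> (forall K, D K -> Kle K L) -> Kle S L).

Definition Kway_below (K1 K2 : X -> Prop) : Prop :=
  forall D S, Kdirected D -> Ksup D S -> Kle K2 S -> exists d, D d /\ Kle K1 d.

Definition K_dcpo : Prop := forall D, Kdirected D -> exists S, Ksup D S.

Definition K_continuous : Prop :=
  K_dcpo /\
  forall K, KX K ->
    let D := fun L => KX L /\ Kway_below L K in
    Kdirected D /\ Ksup D K.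

Definition Kscott_open (U : (X -> Prop) -> Prop) : Prop :=
  (forall K, U K -> KX K) /\
  (forall K K', U K -> KX K' -> Kle K K' -> U K') /\
  (forall D S, Kdirected D -> Ksup D S -> U S -> exists d, D d /\ U d).

Definition xi_sigma_continuous : Prop :=
  forall U, Kscott_open U -> is_open T (fun x => U (upset x)).

Definition property_Q : Prop :=
  forall K1 K2, KX K1 -> KX K2 ->
    (Kway_below K1 K2 <-> subset K2 (interior K1)).

Definition well_filtered : Prop :=
  forall (U : X -> Prop) (F : (X -> Prop) -> Prop),
    is_open T U -> Kdirected F ->
    subset (fun x => forall K, F K -> K x) U ->
    exists K, F K /\ subset K U.

Definition locally_compact : Prop :=
  forall x U, is_open T U -> U x ->
    exists K, compact K /\ interior K x /\ subset K U.

Definition Odirected (D : (X -> Prop) -> Prop) : Prop :=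
  (forall V, D V -> is_open T V) /\ (exists V, D V) /\
  (forall V1 V2, D V1 -> D V2 -> exists V3, D V3 /\ subset V1 V3 /\ subset V2 V3).

Definition Oway_below (V U : X -> Prop) : Prop :=
  forall D, Odirected D -> subset U (fun x => exists W, D W /\ W x) ->
    exists W, D W /\ subset V W.

Definition core_compact : Prop :=
  forall U, is_open T U ->
    let D := fun V => is_open T V /\ Oway_below V U in
    Odirected D /\
    (forall x, U x <-> exists V, D V /\ V x).

End Topo.

From Stdlib Require Import Arith Lia List Classical ClassicalEpsilon FunctionalExtensionality PropExtensionality.

(* In a well-filtered space the supremum in K(X) of a filtered family is its
   intersection.  Second countability turns the failure of each desired
   property into a sequence whose tails have compact saturated upper closures;
   these form a filtered family, and well-filteredness applied to it gives a
   contradiction.  This yields property Q (L << up x forces x into the interior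
   of L), which makes continuity of K(X) equivalent to local compactness, and a
   countable Hofmann-Mislove lemma: the intersection of a chain
   ... << W 2 << W 1 << W 0 of open sets is compact, which together with
   interpolation of << turns core compactness into local compactness. *)

Lemma dependent_choice {A : Type} (P : A -> Prop) (R : A -> A -> Prop) (a0 : A) :
  P a0 -> (forall a, P a -> exists b, P b /\ R a b) ->
  exists f : nat -> A, f 0 = a0 /\ forall n, P (f n) /\ R (f n) (f (S n)).
Proof.
  intros H0 Hstep.
  assert (Hsig : forall s : {a | P a}, exists t : {a | P a}, R (proj1_sig s) (proj1_sig t)).
  { intros [a Pa]. destruct (Hstep a Pa) as [b [Pb Rab]]. exists (exist _ b Pb); auto. }
  destruct (choice _ Hsig) as [next Hnext].
  exists (fun n => proj1_sig (Nat.iter n next (exist _ a0 H0))).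
  split; [reflexivity|]. intros n. split; [apply proj2_sig|apply Hnext].
Qed.

Section Topology.
Context {X : Type} (T : topology X).

Lemma open_ext (U V : X -> Prop) : is_open T U -> (forall x, U x <-> V x) -> is_open T V.
Proof.
  intros HU H. replace V with U; auto.
  apply functional_extensionality; intro x; apply propositional_extensionality; auto.
Qed.

Lemma open_empty : is_open T (fun _ => False).
Proof.
  apply (open_ext (fun x => exists U, (fun _ : X -> Prop => False) U /\ U x)).
  - apply open_union; intros U [].
  - intros x; split; [intros [U [[] _]] | intros []].
Qed.

Lemma open_union2 U V : is_open T U -> is_open T V -> is_open T (fun x => U x \/ V x).
Proof.
  intros HU HV.
  apply (open_ext (fun x => exists W, (W = U \/ W = V) /\ W x)).
  - apply open_union; intros W [->| ->]; auto.
  - intros x; split.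
    + intros [W [[->| ->] H]]; auto.
    + intros [H|H]; eauto.
Qed.

Lemma open_implication (P : Prop) U : is_open T U -> is_open T (fun x => P -> U x).
Proof.
  intros HU. destruct (classic P) as [HP|HP].
  - apply (open_ext U); auto. intros x; tauto.
  - apply (open_ext (fun _ => True)); [apply open_full|]. intros x; tauto.
Qed.

Lemma open_of_local_neighborhoods (P : X -> Prop) :
  (forall x, P x -> exists V, is_open T V /\ V x /\ subset V P) -> is_open T P.
Proof.
  intros H.
  apply (open_ext (fun x => exists V, (is_open T V /\ subset V P) /\ V x)).
  - apply open_union; intros V [? ?]; auto.
  - intros x; split.
    + intros [V [[_ HV] Hx]]; auto.
    + intros Px; destruct (H x Px) as [V [? [? ?]]]; eauto.
Qed.

Lemma interior_open A : is_open T (interior T A).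
Proof.
  apply open_of_local_neighborhoods. intros x [U [HU [Ux HUA]]].
  exists U; repeat split; auto. intros y Uy; exists U; auto.
Qed.

Lemma interior_subset A : subset (interior T A) A.
Proof. intros x [U [_ [Ux H]]]; auto. Qed.

Lemma spec_refl x : spec_le T x x.
Proof. intros U _ H; auto. Qed.

Lemma spec_trans x y z : spec_le T x y -> spec_le T y z -> spec_le T x z.
Proof. intros H1 H2 U HU Ux; exact (H2 U HU (H1 U HU Ux)). Qed.

Lemma saturated_separation K z : saturated T K -> ~ K z ->
  exists V, is_open T V /\ subset K V /\ ~ V z.
Proof.
  intros Hs Hz.
  exists (fun w => exists U, (is_open T U /\ ~ U z) /\ U w). split; [|split].
  - apply open_union; intros U [? ?]; auto.
  - intros y Ky. assert (Hn : ~ spec_le T y z) by (intro H; apply Hz; eapply Hs; eauto).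
    apply not_all_ex_not in Hn as [U Hn].
    apply imply_to_and in Hn as [HU Hn]. apply imply_to_and in Hn as [Uy Hn].
    exists U; auto.
  - intros [U [[_ H] H']]; auto.
Qed.

Lemma upset_KX x : KX T (upset T x).
Proof.
  split; [exists x; apply spec_refl|split].
  - intros C HC Hcov. destruct (Hcov x (spec_refl x)) as [U [CU Ux]].
    exists (U :: nil); split.
    + intros V [<-|[]]; auto.
    + intros z Hz; exists U; split; [left; auto|]. apply Hz; auto.
  - intros y z H1 H2; eapply spec_trans; eauto.
Qed.

(** * Compact and saturated sets *)

Definition up_closure (A : X -> Prop) : X -> Prop :=
  fun z => exists y, A y /\ spec_le T y z.

Lemma subset_up_closure A : subset A (up_closure A).
Proof. intros x Ax; exists x; split; auto; apply spec_refl. Qed.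

Lemma up_closure_subset_open A U : is_open T U -> subset A U -> subset (up_closure A) U.
Proof. intros HU HAU z [y [Ay Hyz]]. apply Hyz; auto. Qed.

Lemma up_closure_compact A : compact T A -> compact T (up_closure A).
Proof.
  intros HA C HC Hcov.
  destruct (HA C HC) as [l [Hl Hlc]].
  - intros y Ay. apply Hcov, subset_up_closure; auto.
  - exists l; split; auto. intros z [y [Ay Hyz]].
    destruct (Hlc y Ay) as [U [InU Uy]]. exists U; split; auto.
    apply Hyz; auto.
Qed.

Lemma up_closure_KX A : (exists x, A x) -> compact T A -> KX T (up_closure A).
Proof.
  intros [x Ax] HA. split; [exists x; apply subset_up_closure; auto|split].
  - apply up_closure_compact; auto.
  - intros a b [y [Ay Hya]] Hab. exists y; split; auto. eapply spec_trans; eauto.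
Qed.

Lemma compact_empty : compact T (fun _ => False).
Proof. intros C _ _; exists nil; split; [intros _ []|intros _ []]. Qed.

Lemma compact_union2 A B : compact T A -> compact T B -> compact T (fun x => A x \/ B x).
Proof.
  intros HA HB C HC Hcov.
  destruct (HA C HC) as [l1 [H1 H1c]]. { intros y Ay; apply Hcov; auto. }
  destruct (HB C HC) as [l2 [H2 H2c]]. { intros y Ay; apply Hcov; auto. }
  exists (l1 ++ l2); split.
  - intros U HU; apply in_app_or in HU as [?|?]; auto.
  - intros z [Az|Bz].
    + destruct (H1c z Az) as [U [? ?]]; exists U; split; auto; apply in_or_app; auto.
    + destruct (H2c z Bz) as [U [? ?]]; exists U; split; auto; apply in_or_app; auto.
Qed.

Lemma compact_list_bound (U : X -> Prop) (l : list (X -> Prop)) :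
  (forall V, In V l -> exists K, compact T K /\ subset V K /\ subset K U) ->
  exists K, compact T K /\ (forall V, In V l -> subset V K) /\ subset K U.
Proof.
  induction l as [|V l IH]; intros Hl.
  - exists (fun _ => False); split; [apply compact_empty|split; [intros _ []|intros _ []]].
  - destruct IH as [K1 [HK1 [Hl1 HK1U]]]; [intros V' HV'; apply Hl; right; auto|].
    destruct (Hl V (or_introl eq_refl)) as [K2 [HK2 [HVK2 HK2U]]].
    exists (fun z => K2 z \/ K1 z); split; [apply compact_union2; auto|split].
    + intros V' [<-|HV'] z Hz; [left; auto|right; apply (Hl1 V'); auto].
    + intros z [?|?]; auto.
Qed.

(** * Convergent sequences and their tails *)

Definition converges (a : nat -> X) (x : X) : Prop :=
  forall V, is_open T V -> V x -> exists m, forall n, m <= n -> V (a n).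

Definition tail (a : nat -> X) (k : nat) : X -> Prop := fun y => exists n, k <= n /\ y = a n.

Definition tail_family (a : nat -> X) : (X -> Prop) -> Prop :=
  fun K => exists k, K = up_closure (tail a k).

Lemma tail_compact a k n0 : k <= n0 -> converges a (a n0) -> compact T (tail a k).
Proof.
  intros Hkn0 Hconv C HC Hcov.
  destruct (Hcov (a n0)) as [U0 [CU0 U0a]]; [exists n0; auto|].
  destruct (Hconv U0 (HC U0 CU0) U0a) as [m Hm].
  assert (Hprefix : forall p, exists l, (forall U, In U l -> C U) /\
            forall n, k <= n < p -> exists U, In U l /\ U (a n)).
  { induction p as [|p [l [Hl Hcl]]].
    - exists nil; split; [intros _ []|intros n Hn; lia].
    - destruct (le_lt_dec k p) as [Hkp|Hpk].
      + destruct (Hcov (a p)) as [U [CU Ua]]; [exists p; auto|].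
        exists (U :: l); split; [intros V [<-|HV]; auto|].
        intros n Hn. destruct (Nat.eq_dec n p) as [->|Hne]; [exists U; split; [left|]; auto|].
        destruct (Hcl n ltac:(lia)) as [V [? ?]]; exists V; split; [right|]; auto.
      + exists l; split; auto. intros n Hn; apply Hcl; lia. }
  destruct (Hprefix m) as [l [Hl Hcl]].
  exists (U0 :: l); split; [intros U [<-|HU]; auto|].
  intros z [n [Hn ->]]. destruct (le_lt_dec m n) as [Hmn|Hnm].
  - exists U0; split; [left|]; auto.
  - destruct (Hcl n ltac:(lia)) as [U [? ?]]; exists U; split; [right|]; auto.
Qed.

Lemma tail_family_Kdirected a :
  (forall k, exists n, k <= n /\ converges a (a n)) -> Kdirected T (tail_family a).
Proof.
  intros Hlim.
  assert (HKX : forall k, KX T (up_closure (tail a k))).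
  { intros k. destruct (Hlim k) as [n [Hkn Hn]].
    apply up_closure_KX; [exists (a n), n; auto|apply (tail_compact a k n); auto]. }
  assert (Hmono : forall k k', k <= k' -> Kle (up_closure (tail a k)) (up_closure (tail a k'))).
  { intros k k' Hk z [y [[n [Hn ->]] Hz]]. exists (a n); split; auto. exists n; split; auto; lia. }
  split; [intros K [k ->]; auto|split; [exists (up_closure (tail a 0)), 0; auto|]].
  intros K1 K2 [k1 ->] [k2 ->]. exists (up_closure (tail a (max k1 k2))).
  split; [exists (max k1 k2); auto|split; apply Hmono; lia].
Qed.

Lemma tail_family_limit a x z :
  converges a x -> (forall K, tail_family a K -> K z) -> spec_le T x z.
Proof.
  intros Hconv Hz U HU Ux. destruct (Hconv U HU Ux) as [m Hm].
  destruct (Hz _ (ex_intro _ m eq_refl)) as [y [[n [Hn ->]] Hyz]]. apply Hyz; auto.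
Qed.

Definition interleave (x : X) (y : nat -> X) (n : nat) : X :=
  if Nat.even n then x else y (Nat.div2 n).

Lemma interleave_double x y k : interleave x y (2 * k) = x.
Proof. unfold interleave. rewrite Nat.even_mul. reflexivity. Qed.

Lemma interleave_succ_double x y k : interleave x y (S (2 * k)) = y k.
Proof.
  unfold interleave. rewrite Nat.even_succ, Nat.odd_mul, Nat.div2_succ_double. reflexivity.
Qed.

Lemma interleave_converges x y : converges y x -> converges (interleave x y) x.
Proof.
  intros Hy V HV Vx. destruct (Hy V HV Vx) as [m Hm]. exists (2 * m). intros n Hn.
  unfold interleave. destruct (Nat.even n); auto. apply Hm.
  pose proof (Nat.div2_odd n) as Hn2. destruct (Nat.odd n); simpl in Hn2; lia.
Qed.

(** * The way-below relations on open sets and on K(X) *)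

Lemma Odirected_list_bound D l : Odirected T D -> (forall W, In W l -> D W) ->
  exists W, D W /\ forall W', In W' l -> subset W' W.
Proof.
  intros [_ [[W0 D0] Hdir]]. induction l as [|V l IH]; intros Hl.
  - exists W0; split; auto. intros _ [].
  - destruct IH as [W [DW HW]]; [intros; apply Hl; right; auto|].
    destruct (Hdir V W) as [W3 [D3 [S1 S2]]]; auto; [apply Hl; left; auto|].
    exists W3; split; auto. intros W' [<-|HW']; auto.
    intros z Wz; apply S2, (HW W' HW'); auto.
Qed.

Lemma chain_Odirected (G : nat -> X -> Prop) :
  (forall i, is_open T (G i)) -> (forall i, subset (G i) (G (S i))) ->
  Odirected T (fun U => exists i, U = G i).
Proof.
  intros HG Hinc.
  assert (Hmono : forall i j, i <= j -> subset (G i) (G j)).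
  { induction 1; [intros z; auto|intros z Hz; apply Hinc; auto]. }
  split; [intros U [i ->]; auto|split; [exists (G 0), 0; auto|]].
  intros U1 U2 [i ->] [j ->]. exists (G (max i j)).
  split; [exists (max i j); auto|split; apply Hmono; lia].
Qed.

Lemma Oway_below_subset V U : is_open T U -> Oway_below T V U -> subset V U.
Proof.
  intros HU H. destruct (H (fun W => W = U)) as [W [-> ?]]; auto.
  - split; [intros W ->; auto|split; [eauto|]].
    intros ? ? -> ->; exists U; split; auto; split; intros ? ?; auto.
  - intros z Uz; eauto.
Qed.

Lemma Oway_below_empty U : Oway_below T (fun _ => False) U.
Proof. intros D [_ [[W DW] _]] _. exists W; split; auto. intros _ []. Qed.

Lemma Oway_below_mono_l V V' U : subset V V' -> Oway_below T V' U -> Oway_below T V U.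
Proof.
  intros H1 H2 D HD HU. destruct (H2 D HD HU) as [W [? ?]]. exists W; split; auto.
  intros z Vz; auto.
Qed.

Lemma Oway_below_mono_r V U U' : subset U U' -> Oway_below T V U -> Oway_below T V U'.
Proof. intros H1 H2 D HD HU. apply H2; auto. intros z Uz. apply HU; auto. Qed.

Lemma Oway_below_union V1 V2 U : Oway_below T V1 U -> Oway_below T V2 U ->
  Oway_below T (fun x => V1 x \/ V2 x) U.
Proof.
  intros H1 H2 D HD HU.
  destruct (H1 D HD HU) as [W1 [D1 S1]]. destruct (H2 D HD HU) as [W2 [D2 S2]].
  destruct HD as [_ [_ Hdir]]. destruct (Hdir W1 W2 D1 D2) as [W3 [D3 [S13 S23]]].
  exists W3; split; auto. intros z [?|?]; auto.
Qed.

Lemma compact_Oway_below V K U : subset V K -> compact T K -> subset K U -> Oway_below T V U.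
Proof.
  intros HVK HK HKU D HD HUD.
  destruct (HK D (proj1 HD)) as [l [Hl Hcl]]; [intros z Kz; apply HUD, HKU; auto|].
  destruct (Odirected_list_bound D l HD Hl) as [W [DW HW]]. exists W; split; auto.
  intros z Vz. destruct (Hcl z (HVK z Vz)) as [W' [InW' W'z]]. apply (HW W' InW'); auto.
Qed.

Lemma Oway_below_finite_subcover V U (C : (X -> Prop) -> Prop) :
  Oway_below T V U -> (forall W, C W -> is_open T W) ->
  subset U (fun z => exists W, C W /\ W z) ->
  exists l, (forall W, In W l -> C W) /\ subset V (fun z => exists W, In W l /\ W z).
Proof.
  intros Hw HC HU.
  set (D := fun G => exists l, (forall W, In W l -> C W) /\
                               G = (fun z => exists W, In W l /\ W z)).
  destruct (Hw D) as [G [[l [Hl ->]] HVG]]; [split; [|split]| |exists l; auto].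
  - intros G [l [Hl ->]]. apply (open_union T (fun W => In W l)). auto.
  - exists (fun z => exists W, In W nil /\ W z), nil. split; [intros _ []|reflexivity].
  - intros G1 G2 [l1 [Hl1 ->]] [l2 [Hl2 ->]].
    exists (fun z => exists W, In W (l1 ++ l2) /\ W z). split; [|split].
    + exists (l1 ++ l2); split; [|reflexivity].
      intros W HW; apply in_app_or in HW as [?|?]; auto.
    + intros z [W [? ?]]; exists W; split; auto; apply in_or_app; auto.
    + intros z [W [? ?]]; exists W; split; auto; apply in_or_app; auto.
  - intros z Uz. destruct (HU z Uz) as [W [CW Wz]].
    exists (fun y => exists W', In W' (W :: nil) /\ W' y). split.
    + exists (W :: nil); split; [intros _ [<-|[]]; auto|reflexivity].
    + exists W; split; [left|]; auto.
Qed.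

Lemma Kway_below_Kle K1 K2 : KX T K2 -> Kway_below T K1 K2 -> Kle K1 K2.
Proof.
  intros HK2 Hw.
  destruct (Hw (fun K => K = K2) K2) as [d [-> H]]; auto.
  - split; [intros K ->; auto|split; [eauto|]].
    intros ? ? -> ->; exists K2; split; auto; split; intros z; auto.
  - split; auto; split; [intros K -> z; auto|intros L _ HL; apply HL; auto].
  - intros z; auto.
Qed.

Lemma Kway_below_mono_r K1 K2 K3 : Kle K2 K3 -> Kway_below T K1 K2 -> Kway_below T K1 K3.
Proof.
  intros H23 Hw D S HD HS H3S. apply (Hw D S HD HS). intros z Sz; apply H23, H3S, Sz.
Qed.

Section GreedyExtension.
Variable good : (X -> Prop) -> Prop.
Variables (B : nat -> X -> Prop) (O : X -> Prop).

Fixpoint greedy_chain (i : nat) : X -> Prop :=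
  match i with
  | 0 => O
  | S i => fun z => greedy_chain i z \/ (good (fun y => greedy_chain i y \/ B i y) /\ B i z)
  end.

Hypothesis good_antitone : forall G G', subset G G' -> good G' -> good G.
Hypothesis good_chain_union : forall G : nat -> X -> Prop,
  (forall i, is_open T (G i)) -> (forall i, subset (G i) (G (S i))) ->
  (forall i, good (G i)) -> good (fun z => exists i, G i z).

Lemma greedy_chain_open_good : (forall i, is_open T (B i)) -> is_open T O -> good O ->
  forall i, is_open T (greedy_chain i) /\ good (greedy_chain i).
Proof.
  intros HB HO HgO. induction i as [|i [Ho Hg]]; [split; auto|].
  destruct (classic (good (fun y => greedy_chain i y \/ B i y))) as [Hgi|Hgi].
  - assert (E : forall z, (greedy_chain i z \/ B i z) <-> greedy_chain (S i) z)
      by (intros z; simpl; tauto).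
    split; [apply (open_ext (fun z => greedy_chain i z \/ B i z)); [apply open_union2|]; auto|].
    apply (good_antitone _ _ (fun z => proj2 (E z))); auto.
  - assert (E : forall z, greedy_chain i z <-> greedy_chain (S i) z)
      by (intros z; simpl; tauto).
    split; [apply (open_ext (greedy_chain i)); auto|].
    apply (good_antitone _ _ (fun z => proj2 (E z))); auto.
Qed.

Lemma greedy_open_extension : (forall i, is_open T (B i)) -> is_open T O -> good O ->
  exists G, is_open T G /\ subset O G /\ good G /\
    forall i, good (fun z => G z \/ B i z) -> subset (B i) G.
Proof.
  intros HB HO HgO.
  pose proof (greedy_chain_open_good HB HO HgO) as Hi.
  assert (Hinc : forall i, subset (greedy_chain i) (greedy_chain (S i)))
    by (intros i z Hz; left; auto).
  exists (fun z => exists i, greedy_chain i z). split; [|split; [|split]].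
  - apply (open_ext (fun z => exists U, (exists i, U = greedy_chain i) /\ U z)).
    + apply open_union. intros U [i ->]; apply Hi.
    + intros z; split; [intros [U [[i ->] Hz]]|intros [i Hz]]; eauto.
  - intros z Hz; exists 0; auto.
  - apply good_chain_union; auto; apply Hi.
  - intros i Hgood z Bz. exists (S i). right; split; auto.
    apply (good_antitone (fun y => greedy_chain i y \/ B i y)
                         (fun y => (exists j, greedy_chain j y) \/ B i y)); auto.
    intros y [Hy|Hy]; [left; exists i|right]; auto.
Qed.

End GreedyExtension.

Lemma core_compact_interpolation : core_compact T ->
  forall V U, is_open T U -> Oway_below T V U ->
  exists W, is_open T W /\ Oway_below T V W /\ Oway_below T W U.
Proof.
  intros CC V U HU HVU.
  set (E := fun W' => exists W, is_open T W /\ Oway_below T W U /\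
                                is_open T W' /\ Oway_below T W' W).
  destruct (HVU E) as [G [[W [HW [HWU [HG HGW]]]] HVG]].
  - split; [intros W' [W [? [? [? ?]]]]; auto|split].
    + exists (fun _ => False), (fun _ => False).
      repeat split; try apply open_empty; apply Oway_below_empty.
    + intros G1 G2 [W1 [O1 [U1 [P1 Q1]]]] [W2 [O2 [U2 [P2 Q2]]]].
      exists (fun x => G1 x \/ G2 x). split; [|split; intros z ?; auto].
      exists (fun x => W1 x \/ W2 x). repeat split.
      * apply open_union2; auto.
      * apply Oway_below_union; auto.
      * apply open_union2; auto.
      * apply Oway_below_union; (eapply Oway_below_mono_r; [|eauto]); intros z ?; auto.
  - intros z Uz. destruct (CC U HU) as [_ H1].
    destruct (proj1 (H1 z) Uz) as [W [[HW HWU] Wz]].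
    destruct (CC W HW) as [_ H2]. destruct (proj1 (H2 z) Wz) as [W' [[HW' HW'W] W'z]].
    exists W'; split; auto. exists W; auto.
  - exists W; split; auto. split; auto. eapply Oway_below_mono_l; eauto.
Qed.

Section LocallyCompact.
Hypothesis LC : locally_compact T.

Lemma compact_saturated_neighborhood K U :
  compact T K -> is_open T U -> subset K U -> (exists x, K x) ->
  exists L, KX T L /\ subset K (interior T L) /\ subset L U.
Proof.
  intros HK HU HKU [x0 Kx0].
  set (C := fun V => is_open T V /\ exists K', compact T K' /\ subset V K' /\ subset K' U).
  destruct (HK C) as [l [Hl Hcl]].
  - intros V [? _]; auto.
  - intros x Kx. destruct (LC x U HU (HKU x Kx)) as [K' [HK' [[V [HV [Vx VK']]] K'U]]].
    exists V; split; [split; [auto|exists K'; auto]|auto].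
  - destruct (compact_list_bound U l) as [K' [HK' [HlK' HK'U]]]; [intros V HV; apply (Hl V HV)|].
    exists (up_closure K'). split; [|split].
    + apply up_closure_KX; auto. destruct (Hcl x0 Kx0) as [V [HV Vx0]].
      exists x0; apply (HlK' V); auto.
    + intros z Kz. destruct (Hcl z Kz) as [V [HV Vz]].
      exists V; split; [apply (Hl V HV)|split; auto].
      intros w Vw; apply subset_up_closure, (HlK' V); auto.
    + apply up_closure_subset_open; auto.
Qed.

Lemma locally_compact_core_compact : core_compact T.
Proof.
  intros U HU. cbv zeta. split; [split; [|split]|].
  - intros V [? ?]; auto.
  - exists (fun _ => False); split; [apply open_empty|apply Oway_below_empty].
  - intros V1 V2 [O1 W1] [O2 W2]. exists (fun x => V1 x \/ V2 x).
    split; [split; [apply open_union2|apply Oway_below_union]; auto|split; intros z ?; auto].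
  - intros x; split.
    + intros Ux. destruct (LC x U HU Ux) as [K [HK [Kx KU]]].
      exists (interior T K); split; [split|]; auto using interior_open.
      apply (compact_Oway_below _ K); auto using interior_subset.
    + intros [V [[HV HVU] Vx]]. apply (Oway_below_subset V U HU HVU); auto.
Qed.

End LocallyCompact.

(** * Well-filtered spaces *)

Definition family_inter (F : (X -> Prop) -> Prop) : X -> Prop := fun x => forall K, F K -> K x.

Section WellFiltered.
Hypothesis WF : well_filtered T.

Lemma filtered_inter_KX F : Kdirected T F -> KX T (family_inter F).
Proof.
  intros HF. destruct HF as [HK [[K0 FK0] Hdir]].
  split; [|split].
  - apply NNPP; intro Hne.
    destruct (WF (fun _ => False) F (open_empty)) as [K [FK HKs]].
    + split; [auto|split; eauto].
    + intros x Hx; apply Hne; eauto.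
    + destruct (HK K FK) as [[x Kx] _]; exact (HKs x Kx).
  - intros C HC Hcov.
    destruct (WF (fun x => exists U, C U /\ U x) F) as [K [FK HKs]].
    + apply open_union; auto.
    + split; [auto|split; eauto].
    + auto.
    + destruct (HK K FK) as [_ [Kc _]].
      destruct (Kc C HC HKs) as [l [? Hl]]. exists l; split; auto.
      intros x Hx; apply Hl; apply Hx; auto.
  - intros x y Hx Hxy K FK. destruct (HK K FK) as [_ [_ Ks]].
    exact (Ks x y (Hx K FK) Hxy).
Qed.

Lemma filtered_inter_Ksup F : Kdirected T F -> Ksup T F (family_inter F).
Proof.
  intros HF. split; [apply filtered_inter_KX; auto|split].
  - intros K FK x Hx; apply Hx; auto.
  - intros L _ HL x Lx K FK; apply (HL K FK); auto.
Qed.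

Lemma well_filtered_K_dcpo : K_dcpo T.
Proof. intros D HD. exists (family_inter D). apply filtered_inter_Ksup; auto. Qed.

Lemma family_inter_subset_Ksup F S : Kdirected T F -> Ksup T F S -> subset (family_inter F) S.
Proof.
  intros HF [_ [_ Hl]]. apply Hl; [apply filtered_inter_KX; auto|].
  intros K FK x Hx; apply Hx; auto.
Qed.

Lemma Kway_below_of_interior K1 K2 : subset K2 (interior T K1) -> Kway_below T K1 K2.
Proof.
  intros H D S HD HS HK2S.
  destruct (WF (interior T K1) D (interior_open K1) HD) as [d [Dd Hd]].
  - intros x Hx. apply H, HK2S. apply (family_inter_subset_Ksup D S HD HS); auto.
  - exists d; split; auto. intros x dx; apply (interior_subset K1), Hd; auto.
Qed.

Section SecondCountable.
Hypothesis SC : second_countable T.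

Lemma countable_neighborhood_base x : exists N : nat -> X -> Prop,
  (forall n, is_open T (N n) /\ N n x) /\
  forall y : nat -> X, (forall n, N n (y n)) -> converges y x.
Proof.
  destruct SC as [B [HBo HB]].
  exists (fun n z => forall i, i <= n -> B i x -> B i z). split.
  - intros n; split; [|intros i _ Bx; auto].
    induction n as [|n IH].
    + apply (open_ext (fun z => B 0 x -> B 0 z)); [apply open_implication; auto|].
      intros z; split; [intros H i Hi; replace i with 0 by lia; auto|intros H; apply H; auto].
    + apply (open_ext (fun z => (forall i, i <= n -> B i x -> B i z) /\ (B (S n) x -> B (S n) z))).
      * apply open_inter; [exact IH|apply open_implication; auto].
      * intros z; split.
        -- intros [H1 H2] i Hi. destruct (Nat.eq_dec i (S n)) as [->|Hne]; auto.
           apply H1; lia.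
        -- intros H; split; [intros i Hi; apply H; lia|apply H; auto].
  - intros y Hy V HV Vx. destruct (HB V HV x Vx) as [i [Bix BiV]].
    exists i. intros n Hn. apply BiV, (Hy n); auto.
Qed.

Lemma Kway_below_upset_interior L x : Kway_below T L (upset T x) -> interior T L x.
Proof.
  intros Hw. apply NNPP; intro Hx.
  destruct (countable_neighborhood_base x) as [N [HN HNconv]].
  assert (Hout : forall n, exists z, N n z /\ ~ L z).
  { intros n. apply NNPP; intro Hn. apply Hx. exists (N n); split; [apply HN|split; [apply HN|]].
    intros z Nz; apply NNPP; intro Lz; apply Hn; eauto. }
  destruct (choice _ Hout) as [y Hy].
  (* [x] occurs in every tail of [b], so every tail of [b] has a limit point. *)
  set (b := interleave x y).
  assert (Hb : converges b x) by (apply interleave_converges, HNconv; intros n; apply Hy).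
  assert (HF : Kdirected T (tail_family b)).
  { apply tail_family_Kdirected. intros k. exists (2 * k); split; [lia|].
    unfold b; rewrite interleave_double; auto. }
  destruct (Hw _ _ HF (filtered_inter_Ksup _ HF)) as [K [[k ->] HK]].
  - intros z Hz. apply (tail_family_limit b x z Hb Hz).
  - apply (proj2 (Hy k)), HK. exists (b (S (2 * k))); split; [exists (S (2 * k)); split; auto; lia|].
    unfold b; rewrite interleave_succ_double; apply spec_refl.
Qed.

Lemma Kway_below_interior K1 K2 :
  saturated T K2 -> Kway_below T K1 K2 -> subset K2 (interior T K1).
Proof.
  intros Hs Hw z Kz. apply Kway_below_upset_interior.
  apply (Kway_below_mono_r K1 K2); auto. intros w Hzw; exact (Hs z w Kz Hzw).
Qed.

Lemma well_filtered_property_Q : property_Q T.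
Proof.
  intros K1 K2 _ [_ [_ Hs]].
  split; [apply Kway_below_interior; auto|apply Kway_below_of_interior].
Qed.

Lemma K_continuous_locally_compact : K_continuous T -> locally_compact T.
Proof.
  intros [_ Hc] x U HU Ux.
  destruct (Hc (upset T x) (upset_KX x)) as [HD HS].
  destruct (WF U _ HU HD) as [L [[HL HLx] HLU]].
  - intros z Hz. apply (family_inter_subset_Ksup _ _ HD HS) in Hz. apply Hz; auto.
  - exists L; split; [apply HL|split; auto]. apply Kway_below_upset_interior; auto.
Qed.

Lemma K_continuous_xi_sigma_continuous : K_continuous T -> xi_sigma_continuous T.
Proof.
  intros [_ Hc] U [HUK [HUup HUd]].
  apply open_of_local_neighborhoods. intros x Ux.
  destruct (Hc (upset T x) (upset_KX x)) as [HD HS].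
  destruct (HUd _ _ HD HS Ux) as [L [[HL HLx] UL]].
  exists (interior T L); split; [apply interior_open|split].
  - apply Kway_below_upset_interior; auto.
  - intros y Iy. apply (HUup L); auto using upset_KX.
    intros z Hyz. apply interior_subset, Hyz; auto using interior_open.
Qed.

Section LocallyCompact.
Hypothesis LC : locally_compact T.

Lemma Kway_below_approximation K U : KX T K -> is_open T U -> subset K U ->
  exists L, KX T L /\ Kway_below T L K /\ subset L U.
Proof.
  intros [Hne [HK _]] HU HKU.
  destruct (compact_saturated_neighborhood LC K U HK HU HKU Hne) as [L [HL [HKL HLU]]].
  exists L; split; [|split]; auto. apply Kway_below_of_interior; auto.
Qed.

Lemma Kway_below_set_Kdirected K : KX T K -> Kdirected T (fun L => KX T L /\ Kway_below T L K).
Proof.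
  intros HK. split; [intros L [? _]; auto|split].
  - destruct (Kway_below_approximation K (fun _ => True) HK (open_full T)) as [L [HL [HLK _]]];
      [intros ? ?; auto|eauto].
  - intros L1 L2 [HL1 W1] [HL2 W2].
    pose proof (Kway_below_interior L1 K (proj2 (proj2 HK)) W1) as I1.
    pose proof (Kway_below_interior L2 K (proj2 (proj2 HK)) W2) as I2.
    destruct (Kway_below_approximation K (fun x => interior T L1 x /\ interior T L2 x) HK)
      as [L3 [HL3 [W3 HL3U]]]; [apply open_inter; apply interior_open|intros z Kz; auto|].
    exists L3; split; [split|split]; auto; intros z L3z; apply interior_subset, HL3U; auto.
Qed.

Lemma Kway_below_set_Ksup K : KX T K -> Ksup T (fun L => KX T L /\ Kway_below T L K) K.
Proof.
  intros HK. split; auto; split.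
  - intros L [_ HLK]; apply Kway_below_Kle; auto.
  - intros L' HL' Hub z L'z. apply NNPP; intro Kz.
    destruct (saturated_separation K z (proj2 (proj2 HK)) Kz) as [V [HV [HKV Vz]]].
    destruct (Kway_below_approximation K V HK HV HKV) as [L [HL [HLK HLV]]].
    apply Vz, HLV, (Hub L (conj HL HLK)); auto.
Qed.

Lemma locally_compact_K_continuous : K_continuous T.
Proof.
  split; [apply well_filtered_K_dcpo|].
  intros K HK. split; [apply Kway_below_set_Kdirected|apply Kway_below_set_Ksup]; auto.
Qed.

End LocallyCompact.

Section WayBelowChain.
Variable W : nat -> X -> Prop.
Hypothesis W_open : forall n, is_open T (W n).
Hypothesis W_way_below : forall n, Oway_below T (W (S n)) (W n).

Lemma way_below_chain_antitone m n : m <= n -> subset (W n) (W m).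
Proof.
  induction 1; [intros z; auto|].
  intros z Hz. apply IHle, (Oway_below_subset (W (S m0)) (W m0)); auto.
Qed.

Definition escapes (G : X -> Prop) : Prop := forall n, ~ subset (W n) G.

Lemma escapes_antitone G G' : subset G G' -> escapes G' -> escapes G.
Proof. intros HGG' HG' n HnG. apply (HG' n). intros z Wz; auto. Qed.

Lemma escapes_chain_union (G : nat -> X -> Prop) :
  (forall i, is_open T (G i)) -> (forall i, subset (G i) (G (S i))) ->
  (forall i, escapes (G i)) -> escapes (fun z => exists i, G i z).
Proof.
  intros HG Hinc Hesc n HnG.
  destruct (W_way_below n (fun U => exists i, U = G i)) as [U [[i ->] Hi]].
  - apply chain_Odirected; auto.
  - intros z Wz. destruct (HnG z Wz) as [i Gz]. exists (G i); eauto.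
  - apply (Hesc i (S n)); auto.
Qed.

(* [G] is an open set containing [O] but no [W n], maximal for adding basic
   open sets.  Points [a n] of [W n] outside [G] then converge to each [a k]:
   a basic neighbourhood of [a k] cannot be added to [G], so it absorbs all of
   [W m] outside [G] for some [m]. *)
Lemma way_below_chain_inter_subset O :
  is_open T O -> subset (fun z => forall n, W n z) O -> exists n, subset (W n) O.
Proof.
  intros HO HWO. apply NNPP; intro Hno.
  assert (HescO : escapes O) by (intros n Hn; apply Hno; eauto).
  destruct SC as [B [HBo HB]].
  destruct (greedy_open_extension escapes B O escapes_antitone escapes_chain_union HBo HO HescO)
    as [G [HG [HOG [HescG Hmax]]]].
  assert (Hpts : forall n, exists z, W n z /\ ~ G z).
  { intros n. apply NNPP; intro Hn. apply (HescG n). intros z Wz.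
    apply NNPP; intro Gz. apply Hn; eauto. }
  destruct (choice _ Hpts) as [a Ha].
  assert (Hconv : forall k, converges a (a k)).
  { intros k V HV Vak. destruct (HB V HV (a k) Vak) as [i [Bi BiV]].
    assert (Hnot : ~ escapes (fun z => G z \/ B i z))
      by (intro Hesc; apply (proj2 (Ha k)), (Hmax i Hesc); auto).
    apply not_all_not_ex in Hnot as [m Hm]. exists m. intros n Hmn.
    destruct (Hm (a n)) as [Gan|Ban]; [|exfalso; apply (Ha n)|apply BiV]; auto.
    apply (way_below_chain_antitone m n Hmn), Ha. }
  destruct (WF O (tail_family a) HO) as [K [[k ->] HK]].
  - apply tail_family_Kdirected. intros k; exists k; auto.
  - intros z Hz. apply HWO. intros n.
    apply (up_closure_subset_open (tail a n) (W n) (W_open n)); [|apply Hz; exists n; auto].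
    intros y [j [Hj ->]]. apply (way_below_chain_antitone n j Hj), Ha.
  - apply (proj2 (Ha k)), HOG, HK, subset_up_closure. exists k; auto.
Qed.

Lemma way_below_chain_inter_compact : compact T (fun z => forall n, W n z).
Proof.
  intros C HC Hcov.
  destruct (way_below_chain_inter_subset _ (open_union T C HC) Hcov) as [n Hn].
  destruct (Oway_below_finite_subcover _ _ C (W_way_below n) HC Hn) as [l [Hl Hcl]].
  exists l; split; auto. intros z Hz. apply Hcl, Hz.
Qed.

End WayBelowChain.

Lemma core_compact_locally_compact : core_compact T -> locally_compact T.
Proof.
  intros CC x U HU Ux.
  destruct (CC U HU) as [_ HUV]. destruct (proj1 (HUV x) Ux) as [V [[HV HVU] Vx]].
  destruct (dependent_choice (fun W => is_open T W /\ Oway_below T V W)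
              (fun W W' => Oway_below T W' W) U (conj HU HVU)) as [Ws [HW0 HWs]].
  { intros W [HW HVW]. destruct (core_compact_interpolation CC V W HW HVW) as [W' [? [? ?]]].
    exists W'; auto. }
  exists (fun z => forall n, Ws n z). split; [|split].
  - apply way_below_chain_inter_compact; intros n; apply HWs.
  - exists V; split; auto; split; auto. intros z Vz n.
    apply (Oway_below_subset V (Ws n)); try apply HWs; auto.
  - intros z Hz; rewrite <- HW0; apply Hz.
Qed.

End SecondCountable.
End WellFiltered.

End Topology.

Theorem mainTheorem17 (X : Type) (T : topology X) :
  T0 T -> second_countable T -> well_filtered T ->
  (locally_compact T <-> (K_continuous T /\ xi_sigma_continuous T)) /\
  ((K_continuous T /\ xi_sigma_continuous T) <-> (K_continuous T /\ property_Q T)) /\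
  ((K_continuous T /\ property_Q T) <-> K_continuous T) /\
  (K_continuous T <-> core_compact T).
Proof.
  intros _ SC WF.
  pose proof (well_filtered_property_Q T WF SC) as HQ.
  pose proof (K_continuous_xi_sigma_continuous T WF SC) as Hxi.
  assert (HK : K_continuous T <-> locally_compact T)
    by (split; [apply K_continuous_locally_compact|apply locally_compact_K_continuous]; auto).
  assert (HC : locally_compact T <-> core_compact T)
    by (split; [apply locally_compact_core_compact|apply core_compact_locally_compact]; auto).
  tauto.
Qed.
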